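(* Let $p$ be a prime and let $n\in\mathcal{M}_p^{(2)}$. If $q$ is a prime with $q<p$ and $q\mid n$, then $q\in\{2,3,7,43\}$.
   Context: For positive integers $k,n$ let $S_k(n)=\sum_{i=1}^{n} i^k$. For an integer $a$, $\mathcal{M}_a$ denotes the set of positive integers $n$ such that $S_n(n)\equiv a\pmod{n}$. For a prime $p$, $\mathcal{M}_p^{(2)}=\{n\in\mathcal{M}_p : p^2\mid n,\ p^3\nmid n\}$. *)

From mathcomp Require Import all_boot.
Set Implicit Arguments. Unset Strict Implicit. Unset Printing Implicit Defensive.

Definition S (k n : nat) : nat := \sum_(1 <= i < n.+1) i ^ k.

Definition inM (a n : nat) : Prop := 0 < n /\ S n n = a %[mod n].

Definition inM2 (p n : nat) : Prop := inM p n /\ p ^ 2 %| n /\ ~~ (p ^ 3 %| n).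

From mathcomp Require Import all_boot ssralg zmodp poly finalg cyclic finfield.
Import GRing.Theory.
Set Implicit Arguments. Unset Strict Implicit. Unset Printing Implicit Defensive.
Local Open Scope ring_scope.

(* Modulo a prime r dividing n, S_k(n) is n/r copies of the power sum
   \sum_(x : F_r) x^k, which vanishes unless r - 1 divides k.  For a prime
   divisor q < p of n, S_n(n) = p is nonzero mod q, so q^2 does not divide n
   and q - 1 divides n.  Hence q - 1 is squarefree and its prime factors are
   again such primes; by strong induction they lie in {2, 3, 7, 43}, so
   q - 1 divides 1806, and the only primes of that form are 2, 3, 7, 43. *)

Lemma finField_sum_expr_eq0 (F : finFieldType) (k : nat) :
  ~~ (#|F|.-1 %| k)%N -> \sum_(x : F) x ^+ k = 0.
Proof.
move=> ndvd_k; have F_gt1 := finNzRing_gt1 F; set m := #|F|.-1.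
have m_gt0 : (0 < m)%N by rewrite ltn_predRL.
set units := enum (predC1 (0 : F)).
have size_units : size units = m by rewrite -cardE cardC1.
have units_root : all m.-unity_root units.
  apply/allP => x; rewrite mem_enum unity_rootE => x_neq0.
  by apply/eqP/(mulfI x_neq0); rewrite mulr1 -exprS prednK ?expf_card // ltnW.
have /hasP[w] : has m.-primitive_root units.
  by apply: has_prim_root; rewrite ?size_units ?enum_uniq.
rewrite mem_enum => w_neq0 w_prim.
have wk_neq1 : w ^+ k != 1 by rewrite -(prim_order_dvd w_prim).
have : w ^+ k * \sum_(x : F) x ^+ k = \sum_(x : F) x ^+ k.
  rewrite mulr_sumr [RHS](reindex_inj (mulfI w_neq0)).
  by apply: eq_bigr => x _; rewrite exprMn.
move/eqP; rewrite -subr_eq0 -{2}[\sum_x _]mul1r -mulrBl mulf_eq0 subr_eq0.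
by rewrite (negbTE wk_neq1) => /eqP.
Qed.

Lemma sumr_nat_periodic (V : nmodType) (f : nat -> V) (r k : nat) :
  (forall i, f (i + r)%N = f i) ->
  \sum_(0 <= i < k * r) f i = (\sum_(0 <= i < r) f i) *+ k.
Proof.
move=> f_per; have f_perM i j : f (i + j * r)%N = f i.
  by elim: j => [|j IHj]; rewrite ?addn0 // mulSnr addnA f_per.
elim: k => [|k IHk]; first by rewrite mul0n big_geq.
rewrite mulSnr mulrSr -IHk (@big_cat_nat _ _ _ (k * r)) ?leq_addr //=.
congr (_ + _); rewrite -{1}[(k * r)%N]add0n big_addn addKn.
by apply: eq_bigr => i _; rewrite f_perM.
Qed.

Lemma sum_Fp_nat (V : nmodType) (r : nat) (f : 'F_r -> V) : prime r ->
  \sum_(0 <= i < r) f i%:R = \sum_(x : 'F_r) f x.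
Proof.
move=> r_prime; rewrite -{1}(Fp_cast r_prime) big_mkord.
by apply: eq_bigr => i _; rewrite natr_Zp.
Qed.

Lemma natr_S_Fp (r k n : nat) : prime r -> (0 < k)%N -> (r %| n)%N ->
  (S k n)%:R = (\sum_(x : 'F_r) x ^+ k) *+ (n %/ r).
Proof.
move=> r_prime k_gt0 r_dvd_n; have r_char := pchar_Fp r_prime.
have nat_eq0 m : (r %| m)%N -> (m%:R : 'F_r) = 0 by rewrite (dvdn_pcharf r_char) => /eqP.
pose g i := (i%:R : 'F_r) ^+ k.
have g0 : g 0%N = 0 by rewrite /g expr0n eqn0Ngt k_gt0.
have gn : g n = 0 by rewrite /g nat_eq0 // expr0n eqn0Ngt k_gt0.
have g_per i : g (i + r)%N = g i by rewrite /g natrD (nat_eq0 r) ?addr0.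
have -> : ((S k n)%:R : 'F_r) = \sum_(0 <= i < n.+1) g i.
  by rewrite /S natr_sum [RHS]big_ltn // g0 add0r; apply: eq_bigr => i _; rewrite natrX.
rewrite big_nat_recr //= -/(g n) gn addr0 -{1}(divnK r_dvd_n) sumr_nat_periodic //.
by rewrite (@sum_Fp_nat _ r (fun x => x ^+ k)).
Qed.

Local Close Scope ring_scope.

Lemma prime_dvd_S (r k n : nat) : prime r -> 0 < k -> r %| n ->
  r ^ 2 %| n \/ ~~ (r.-1 %| k) -> r %| S k n.
Proof.
move=> r_prime k_gt0 r_dvd_n r2_dvd_n_or; rewrite (dvdn_pcharf (pchar_Fp r_prime)).
rewrite natr_S_Fp //; apply/eqP; case: r2_dvd_n_or => [r2_dvd_n | r1_ndvd_k].
  have : r %| n %/ r by rewrite dvdn_divRL // -expnSr.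
  rewrite -mulr_natr (dvdn_pcharf (pchar_Fp r_prime)) => /eqP ->.
  by rewrite mulr0.
by rewrite finField_sum_expr_eq0 ?card_Fp // mul0rn.
Qed.

Lemma inM_small_prime_divisor (p n q : nat) : prime p -> inM p n ->
  prime q -> q < p -> q %| n -> ~~ (q ^ 2 %| n) /\ q.-1 %| n.
Proof.
move=> p_prime [n_gt0 S_eq_p] q_prime q_lt_p q_dvd_n.
have q_ndvd_S : ~~ (q %| S n n).
  rewrite /dvdn -(modn_dvdm _ q_dvd_n) S_eq_p (modn_dvdm _ q_dvd_n) -/(q %| p).
  by rewrite dvdn_prime2 // neq_ltn q_lt_p.
split; first by apply: contra q_ndvd_S => q2_dvd_n; apply: prime_dvd_S => //; left.
by apply: contraR q_ndvd_S => q1_ndvd_n; apply: prime_dvd_S => //; right.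
Qed.

Lemma dvdn_sqfree (d m : nat) : 0 < d ->
  (forall s, prime s -> s %| d -> ~~ (s ^ 2 %| d) /\ s %| m) -> d %| m.
Proof.
move=> d_gt0 sqfree_d; apply/dvdn_partP => // s; rewrite mem_primes.
case/and3P => s_prime _ s_dvd_d; have [s2_ndvd_d s_dvd_m] := sqfree_d s s_prime s_dvd_d.
rewrite p_part; have : logn s d <= 1 by rewrite leqNgt -(pfactor_dvdn 2 s_prime d_gt0).
by case: (logn s d) => [|[|]] //; rewrite expn1.
Qed.

Lemma prime_succ_dvd_1806 (d : nat) : d %| 1806 -> prime d.+1 ->
  d.+1 \in [:: 2; 3; 7; 43].
Proof.
have : all (fun d => prime d.+1 ==> (d.+1 \in [:: 2; 3; 7; 43])) (divisors 1806).
  by vm_compute.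
move=> /allP all_divisors; rewrite dvdn_divisors; last by [].
by move=> /all_divisors/implyP.
Qed.

Lemma dvdn_pred_prime_lt (s q : nat) : prime q -> s %| q.-1 -> s < q.
Proof.
move=> q_prime s_dvd_q1; rewrite -(prednK (prime_gt0 q_prime)) ltnS dvdn_leq //.
by rewrite ltn_predRL prime_gt1.
Qed.

(* 2, 3, 7, 43 start Sylvester's sequence (each term is one more than the
   product of the previous ones); the next term 1807 = 13 * 139 is not prime. *)
Lemma sub_sylvester_primes (P : nat -> Prop) :
  (forall q, P q -> prime q /\
     forall s, prime s -> s %| q.-1 -> P s /\ ~~ (s ^ 2 %| q.-1)) ->
  forall q, P q -> q \in [:: 2; 3; 7; 43].
Proof.
move=> P_closed q; elim: q {-2}q (leqnn q) => [|b IHb] q q_le_b Pq.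
  by have [] := P_closed q Pq; rewrite leqn0 in q_le_b; rewrite (eqP q_le_b).
have [q_prime P_pred] := P_closed q Pq.
rewrite -(prednK (prime_gt0 q_prime)).
apply: prime_succ_dvd_1806; last by rewrite prednK ?prime_gt0.
apply: dvdn_sqfree => [|s s_prime s_dvd_q1]; first by rewrite ltn_predRL prime_gt1.
have [Ps s2_ndvd_q1] := P_pred s s_prime s_dvd_q1; split=> //.
have s_le_b := leq_trans (dvdn_pred_prime_lt q_prime s_dvd_q1) q_le_b.
by move: (IHb s s_le_b Ps); rewrite !inE => /or4P[] /eqP ->.
Qed.

Theorem mainTheorem5 (p n q : nat) :
  prime p -> inM2 p n -> prime q -> q < p -> q %| n ->
  q \in [:: 2; 3; 7; 43].
Proof.
move=> p_prime [n_inM _] q_prime q_lt_p q_dvd_n.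
apply: (@sub_sylvester_primes (fun r => [/\ prime r, r < p & r %| n])); last by split.
move=> r [r_prime r_lt_p r_dvd_n]; split=> // s s_prime s_dvd_r1.
have [_ r1_dvd_n] := inM_small_prime_divisor p_prime n_inM r_prime r_lt_p r_dvd_n.
have s_lt_p := ltn_trans (dvdn_pred_prime_lt r_prime s_dvd_r1) r_lt_p.
have s_dvd_n := dvdn_trans s_dvd_r1 r1_dvd_n.
have [s2_ndvd_n _] := inM_small_prime_divisor p_prime n_inM s_prime s_lt_p s_dvd_n.
by split=> //; apply: contra s2_ndvd_n => /dvdn_trans; apply.
Qed.
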